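(* Let $e$ be a closed term with $\vdash e:\perp\to X$, where $X$ is a propositional variable. Then for each $\lambda$-variable $x$ and each finite sequence of $\lambda$-variables $\bar y$, $(e\;x)\;\bar y\triangleright^*\underline{\mu}.x$, i.e. $(e\;x)\;\bar y$ reduces to some element of $M_x$.
   Context: $\lambda\mu$-terms: $t::= x\mid \lambda x.t\mid (t\;t)\mid \mu a.t\mid (a\;t)$ over disjoint infinite sets of $\lambda$-variables and $\mu$-variables; types built from propositional variables and $\perp$ with $\to$. Reduction $(\lambda x.u\;v)\triangleright u[x:=v]$, $(\mu a.u\;v)\triangleright\mu a.u[a:=^*v]$ ($u[a:=^*v]$ replaces each subterm $(a\;w)$ of $u$ by $(a\;(w\;v))$), $\triangleright^*$ its reflexive transitive compatible closure. Typing rules: (ax) $\Gamma\vdash x:A;\Delta$ if $x:A\in\Gamma$; ($\to_i$) from $\Gamma,x:A\vdash t:B;\Delta$ infer $\Gamma\vdash\lambda x.t:A\to B;\Delta$; ($\to_e$) from $\Gamma\vdash u:A\to B;\Delta$, $\Gamma\vdash v:A;\Delta$ infer $\Gamma\vdash(u\;v):B;\Delta$; ($\mu$) from $\Gamma\vdash t:\perp;\Delta,a:A$ infer $\Gamma\vdash\mu a.t:A;\Delta$; ($\perp$) from $\Gamma\vdash t:A;\Delta,a:A$ infer $\Gamma\vdash(a\;t):\perp;\Delta,a:A$; $\vdash$ means empty contexts. For a sequence $\bar y=y_1\dots y_n$, $t\;\bar y=((t\;y_1)\dots y_n)$. For a term $t$, $M_t$ is the smallest set containing $t$ such that $u\in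 M_t$ and $a$ a $\mu$-variable imply $\mu a.u\in M_t$ and $(a\;u)\in M_t$; $\underline{\mu}.t$ denotes an arbitrary element of $M_t$. *)

(* Lambda-mu calculus with locally-nameless-free, two-sorted
   de Bruijn indices: lambda-variables and mu-variables live in separate
   index spaces (they are disjoint sorts), so a mu-binder does not shift
   lambda-indices and vice versa. *)
From Stdlib Require Import List Arith Relations.
Import ListNotations.

Inductive term : Type :=
| Var  : nat -> term
| Lam  : term -> term
| App  : term -> term -> term
| Mu   : term -> term
| MApp : nat -> term -> term.   (* (a t), a a mu-variable (de Bruijn index) *)

Inductive type : Type :=
| TVar : nat -> type
| TBot : type
| TArr : type -> type -> type.

Fixpoint lift_lam (c : nat) (t : term) : term :=
  match t with
  | Var n => if n <? c then Var n else Var (S n)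
  | Lam u => Lam (lift_lam (S c) u)
  | App u v => App (lift_lam c u) (lift_lam c v)
  | Mu u => Mu (lift_lam c u)
  | MApp a u => MApp a (lift_lam c u)
  end.

Fixpoint lift_mu (c : nat) (t : term) : term :=
  match t with
  | Var n => Var n
  | Lam u => Lam (lift_mu c u)
  | App u v => App (lift_mu c u) (lift_mu c v)
  | Mu u => Mu (lift_mu (S c) u)
  | MApp a u => MApp (if a <? c then a else S a) (lift_mu c u)
  end.

(* capture-avoiding substitution u[x := v] for the lambda-variable of index k
   (free lambda-indices above k are decremented, as the binder disappears) *)
Fixpoint subst (t : term) (k : nat) (v : term) : term :=
  match t with
  | Var n => if n =? k then v else if k <? n then Var (pred n) else Var n
  | Lam u => Lam (subst u (S k) (lift_lam 0 v))
  | App u w => App (subst u k v) (subst w k v)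
  | Mu u => Mu (subst u k (lift_mu 0 v))
  | MApp a u => MApp a (subst u k v)
  end.

Fixpoint msubst (t : term) (k : nat) (v : term) : term :=
  match t with
  | Var n => Var n
  | Lam u => Lam (msubst u k (lift_lam 0 v))
  | App u w => App (msubst u k v) (msubst w k v)
  | Mu u => Mu (msubst u (S k) (lift_mu 0 v))
  | MApp a u =>
      if a =? k then MApp a (App (msubst u k v) v) else MApp a (msubst u k v)
  end.

Inductive step : term -> term -> Prop :=
| step_beta : forall u v, step (App (Lam u) v) (subst u 0 v)
| step_mu : forall u v, step (App (Mu u) v) (Mu (msubst u 0 (lift_mu 0 v)))
| step_lam : forall t t', step t t' -> step (Lam t) (Lam t')
| step_appl : forall t t' u, step t t' -> step (App t u) (App t' u)
| step_appr : forall t u u', step u u' -> step (App t u) (App t u')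
| step_mu_c : forall t t', step t t' -> step (Mu t) (Mu t')
| step_mapp : forall a t t', step t t' -> step (MApp a t) (MApp a t').

Definition red : term -> term -> Prop := clos_refl_trans term step.

(* typing judgement  Gamma |- t : A ; Delta  (Curry style) *)
Inductive typing : list type -> list type -> term -> type -> Prop :=
| ty_ax : forall G D n A, nth_error G n = Some A -> typing G D (Var n) A
| ty_lam : forall G D t A B, typing (A :: G) D t B -> typing G D (Lam t) (TArr A B)
| ty_app : forall G D u v A B,
    typing G D u (TArr A B) -> typing G D v A -> typing G D (App u v) B
| ty_mu : forall G D t A, typing G (A :: D) t TBot -> typing G D (Mu t) A
| ty_bot : forall G D a t A,
    nth_error D a = Some A -> typing G D t A -> typing G D (MApp a t) TBot.

Definition apps (t : term) (ys : list nat) : term :=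
  fold_left (fun acc y => App acc (Var y)) ys t.

Inductive M (t : term) : term -> Prop :=
| M_base : M t t
| M_mu : forall u, M t u -> M t (Mu u)
| M_mapp : forall a u, M t u -> M t (MApp a u).

From Stdlib Require Import List Arith Lia Relations FunctionalExtensionality.
Import ListNotations.

(* A realizability argument. Fix the variable x and let a type A denote a set
   of stacks: the empty stack for ⊥, stacks of λ-variables for a propositional
   variable, and [u :: p] for A → B, with u realizing A and p a B-stack. A term
   realizes A when, under every renaming of μ-variables, applying it to any
   A-stack reduces into M_x. Every typed term realizes its type under a
   substitution of realizers for its λ-variables and of stacks for its
   μ-variables: a μ-abstraction [μa.t] applied to a stack p reduces to
   [μa.t[a :=* p]], which is how μ-variables pick up their stacks. Now x
   trivially realizes ⊥ and y1 … yn is an X-stack, so e applied to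
   x y1 … yn reduces into M_x. *)

Arguments Nat.eqb : simpl never.
Arguments Nat.ltb : simpl never.

Ltac index_arith := repeat (simpl; match goal with
  | |- context [?a <? ?b] => destruct (Nat.ltb_spec a b)
  | |- context [?a =? ?b] => destruct (Nat.eqb_spec a b) end);
  simpl; try reflexivity; try (f_equal; lia); try lia.

Lemma lift_lam_lift_lam (t : term) (c d : nat) : c <= d ->
  lift_lam (S d) (lift_lam c t) = lift_lam c (lift_lam d t).
Proof.
  revert c d; induction t; intros c d H; simpl; try (f_equal; auto; fail).
  - index_arith.
  - f_equal. apply IHt. lia.
Qed.

Lemma lift_mu_lift_mu (t : term) (c d : nat) : c <= d ->
  lift_mu (S d) (lift_mu c t) = lift_mu c (lift_mu d t).
Proof.
  revert c d; induction t; intros c d H; simpl; try (f_equal; auto; fail).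
  - f_equal. apply IHt. lia.
  - rewrite IHt by auto. f_equal. index_arith.
Qed.

Lemma lift_lam_lift_mu (t : term) (c d : nat) :
  lift_lam c (lift_mu d t) = lift_mu d (lift_lam c t).
Proof.
  revert c d; induction t; intros c d; simpl; try (f_equal; auto; fail).
  index_arith.
Qed.

Lemma subst_lift_lam (t : term) (k : nat) (u : term) :
  subst (lift_lam k t) k u = t.
Proof.
  revert k u; induction t; intros k u; simpl; try (f_equal; auto; fail).
  index_arith.
Qed.

Lemma subst_lift_lam_comm (t : term) (c k : nat) (u : term) : c <= k ->
  subst (lift_lam c t) (S k) (lift_lam c u) = lift_lam c (subst t k u).
Proof.
  revert c k u; induction t; intros c k u H; simpl; try (f_equal; auto; fail).
  - index_arith.
  - f_equal. rewrite <- IHt by lia. rewrite lift_lam_lift_lam by lia. reflexivity.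
  - f_equal. rewrite <- IHt by lia. rewrite lift_lam_lift_mu. reflexivity.
Qed.

Lemma subst_lift_mu (t : term) (c k : nat) (u : term) :
  subst (lift_mu c t) k (lift_mu c u) = lift_mu c (subst t k u).
Proof.
  revert c k u; induction t; intros c k u; simpl; try (f_equal; auto; fail).
  - index_arith.
  - f_equal. rewrite <- IHt. rewrite lift_lam_lift_mu. reflexivity.
  - f_equal. rewrite <- IHt. rewrite lift_mu_lift_mu by lia. reflexivity.
Qed.

Lemma msubst_lift_lam (t : term) (c k : nat) (w : term) :
  msubst (lift_lam c t) k (lift_lam c w) = lift_lam c (msubst t k w).
Proof.
  revert c k w; induction t; intros c k w; simpl; try (f_equal; auto; fail).
  - index_arith.
  - f_equal. rewrite <- IHt. rewrite lift_lam_lift_lam by lia. reflexivity.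
  - f_equal. rewrite <- IHt. rewrite lift_lam_lift_mu. reflexivity.
  - destruct (n =? k); simpl; rewrite IHt; reflexivity.
Qed.

Lemma msubst_lift_mu (t : term) (c k : nat) (w : term) : c <= k ->
  msubst (lift_mu c t) (S k) (lift_mu c w) = lift_mu c (msubst t k w).
Proof.
  revert c k w; induction t; intros c k w H; simpl; try (f_equal; auto; fail).
  - f_equal. rewrite <- IHt by lia. rewrite lift_lam_lift_mu. reflexivity.
  - f_equal. rewrite <- IHt by lia. rewrite lift_mu_lift_mu by lia. reflexivity.
  - index_arith; rewrite IHt by lia; reflexivity.
Qed.

Lemma msubst_lift_mu_fresh (t : term) (k : nat) (w : term) :
  msubst (lift_mu k t) k w = lift_mu k t.
Proof.
  revert k w; induction t; intros k w; simpl; try (f_equal; auto; fail).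
  rewrite IHt. index_arith.
Qed.

(** * Renaming of μ-variables *)

Definition up_ren (z : nat -> nat) (a : nat) : nat :=
  match a with 0 => 0 | S b => S (z b) end.

Fixpoint mren (z : nat -> nat) (t : term) : term :=
  match t with
  | Var n => Var n
  | Lam u => Lam (mren z u)
  | App u v => App (mren z u) (mren z v)
  | Mu u => Mu (mren (up_ren z) u)
  | MApp a u => MApp (z a) (mren z u)
  end.

Lemma mren_lift_lam (t : term) (z : nat -> nat) (c : nat) :
  mren z (lift_lam c t) = lift_lam c (mren z t).
Proof.
  revert z c; induction t; intros z c; simpl; try (f_equal; auto; fail).
  destruct (n <? c); reflexivity.
Qed.

Lemma lift_mu_mren (t : term) (c : nat) :
  lift_mu c t = mren (fun a => if a <? c then a else S a) t.
Proof.
  revert c; induction t; intros c; simpl; try (f_equal; auto; fail).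
  f_equal. rewrite IHt. f_equal. apply functional_extensionality.
  intros [|a]; [reflexivity|]. cbv [up_ren]. change (S a <? S c) with (a <? c).
  destruct (a <? c); reflexivity.
Qed.

Lemma mren_mren (t : term) (z z' : nat -> nat) :
  mren z' (mren z t) = mren (fun a => z' (z a)) t.
Proof.
  revert z z'; induction t; intros z z'; simpl; try (f_equal; auto; fail).
  f_equal. rewrite IHt. f_equal. apply functional_extensionality.
  intros [|a]; reflexivity.
Qed.

Lemma mren_id (t : term) : mren (fun a => a) t = t.
Proof.
  induction t; simpl; try (f_equal; auto; fail).
  f_equal. rewrite <- IHt at 2. f_equal. apply functional_extensionality.
  intros [|a]; reflexivity.
Qed.

Lemma mren_up_lift_mu (t : term) (z : nat -> nat) :
  mren (up_ren z) (lift_mu 0 t) = lift_mu 0 (mren z t).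
Proof. rewrite !lift_mu_mren, !mren_mren. reflexivity. Qed.

Definition apply_stack (t : term) (p : list term) : term := fold_left App p t.

Lemma apply_stack_snoc (t : term) (p : list term) (w : term) :
  apply_stack t (p ++ [w]) = App (apply_stack t p) w.
Proof. unfold apply_stack. rewrite fold_left_app. reflexivity. Qed.

Lemma apps_apply_stack (t : term) (ys : list nat) :
  apps t ys = apply_stack t (map Var ys).
Proof. revert t; induction ys; intros; simpl; auto. Qed.

Lemma mren_apply_stack (p : list term) (t : term) (z : nat -> nat) :
  mren z (apply_stack t p) = apply_stack (mren z t) (map (mren z) p).
Proof. revert t; induction p; intros; simpl; auto. Qed.

Lemma subst_apply_stack (p : list term) (t : term) (k : nat) (u : term) :
  subst (apply_stack t p) k u =
  apply_stack (subst t k u) (map (fun w => subst w k u) p).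
Proof. revert t; induction p; intros; simpl; auto. Qed.

Lemma msubst_apply_stack (p : list term) (t : term) (k : nat) (u : term) :
  msubst (apply_stack t p) k u =
  apply_stack (msubst t k u) (map (fun w => msubst w k u) p).
Proof. revert t; induction p; intros; simpl; auto. Qed.

(** * Simultaneous substitution *)

Definition up_subst (s : nat -> term) (n : nat) : term :=
  match n with 0 => Var 0 | S m => lift_lam 0 (s m) end.

Definition scons (u : term) (s : nat -> term) (n : nat) : term :=
  match n with 0 => u | S m => s m end.

Definition up_stacks (p : list term) (r : nat -> list term) (a : nat) :=
  map (lift_mu 0) (match a with 0 => p | S b => r b end).

Fixpoint ssubst (s : nat -> term) (z : nat -> nat) (r : nat -> list term)
    (t : term) : term :=
  match t with
  | Var n => s n
  | Lam u => Lam (ssubst (up_subst s) z (fun a => map (lift_lam 0) (r a)) u)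
  | App u v => App (ssubst s z r u) (ssubst s z r v)
  | Mu u => Mu (ssubst (fun n => lift_mu 0 (s n)) (up_ren z) (up_stacks [] r) u)
  | MApp a u => MApp (z a) (apply_stack (ssubst s z r u) (r a))
  end.

Lemma ssubst_id (t : term) : ssubst Var (fun a => a) (fun _ => []) t = t.
Proof.
  induction t; simpl; try (f_equal; auto; fail);
    f_equal; rewrite <- IHt at 2; f_equal;
    apply functional_extensionality; intros [|n]; reflexivity.
Qed.

Lemma mren_ssubst (t : term) s z r (z' : nat -> nat) :
  mren z' (ssubst s z r t) =
  ssubst (fun n => mren z' (s n)) (fun a => z' (z a))
         (fun a => map (mren z') (r a)) t.
Proof.
  revert s z r z'; induction t; intros s z r z'; simpl; try (f_equal; auto; fail).
  - f_equal. rewrite IHt. f_equal.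
    + apply functional_extensionality; intros [|n]; simpl; auto.
      apply mren_lift_lam.
    + apply functional_extensionality; intros a. rewrite !map_map.
      apply map_ext. intros; apply mren_lift_lam.
  - f_equal. rewrite IHt. f_equal.
    + apply functional_extensionality; intros n. apply mren_up_lift_mu.
    + apply functional_extensionality; intros [|a]; reflexivity.
    + apply functional_extensionality; intros [|a]; simpl; auto.
      unfold up_stacks. rewrite !map_map. apply map_ext.
      intros; apply mren_up_lift_mu.
  - rewrite mren_apply_stack, IHt. reflexivity.
Qed.

Lemma subst_ssubst (t : term) s z r (k : nat) (u : term) :
  subst (ssubst s z r t) k u =
  ssubst (fun n => subst (s n) k u) z (fun a => map (fun w => subst w k u) (r a)) t.
Proof.
  revert s z r k u; induction t; intros s z r k u; simpl;
    try (f_equal; auto; fail).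
  - f_equal. rewrite IHt. f_equal.
    + apply functional_extensionality; intros [|n]; simpl; auto.
      apply subst_lift_lam_comm. lia.
    + apply functional_extensionality; intros a. rewrite !map_map.
      apply map_ext. intros; apply subst_lift_lam_comm; lia.
  - f_equal. rewrite IHt. f_equal.
    + apply functional_extensionality; intros n. apply subst_lift_mu.
    + apply functional_extensionality; intros [|a]; simpl; auto.
      unfold up_stacks. rewrite !map_map. apply map_ext.
      intros; apply subst_lift_mu.
  - rewrite subst_apply_stack, IHt. reflexivity.
Qed.

Lemma subst_ssubst_up (t : term) s z r (u : term) :
  subst (ssubst (up_subst s) z (fun a => map (lift_lam 0) (r a)) t) 0 u =
  ssubst (scons u s) z r t.
Proof.
  rewrite subst_ssubst. f_equal.
  - apply functional_extensionality; intros [|n]; simpl.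
    + reflexivity.
    + apply subst_lift_lam.
  - apply functional_extensionality; intros a. rewrite map_map.
    rewrite <- (map_id (r a)) at 2. apply map_ext. intros; apply subst_lift_lam.
Qed.

Lemma msubst_ssubst (t : term) s z r (k : nat) (w : term) :
  msubst (ssubst s z r t) k w =
  ssubst (fun n => msubst (s n) k w) z
    (fun a => map (fun v => msubst v k w) (r a) ++ (if z a =? k then [w] else [])) t.
Proof.
  revert s z r k w; induction t; intros s z r k w; simpl;
    try (f_equal; auto; fail).
  - f_equal. rewrite IHt. f_equal.
    + apply functional_extensionality; intros [|n]; simpl; auto.
      apply msubst_lift_lam.
    + apply functional_extensionality; intros a. rewrite map_app, !map_map.
      f_equal.
      * apply map_ext. intros; apply msubst_lift_lam.
      * destruct (z a =? k); reflexivity.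
  - f_equal. rewrite IHt. f_equal.
    + apply functional_extensionality; intros n. apply msubst_lift_mu. lia.
    + apply functional_extensionality; intros [|a]; simpl; auto.
      unfold up_stacks. rewrite map_app, !map_map. f_equal.
      * apply map_ext. intros; apply msubst_lift_mu; lia.
      * change (S (z a) =? S k) with (z a =? k). destruct (z a =? k); reflexivity.
  - rewrite msubst_apply_stack, IHt. destruct (z n =? k); simpl.
    + rewrite apply_stack_snoc. reflexivity.
    + rewrite app_nil_r. reflexivity.
Qed.

Lemma msubst0_ssubst_mu (t : term) s z r (l : list term) (w : term) :
  msubst (ssubst (fun n => lift_mu 0 (s n)) (up_ren z) (up_stacks l r) t) 0
    (lift_mu 0 w) =
  ssubst (fun n => lift_mu 0 (s n)) (up_ren z) (up_stacks (l ++ [w]) r) t.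
Proof.
  rewrite msubst_ssubst. f_equal.
  - apply functional_extensionality; intros n. apply msubst_lift_mu_fresh.
  - apply functional_extensionality; intros [|b]; simpl; unfold up_stacks.
    + rewrite map_app, map_map. f_equal. apply map_ext.
      intros; apply msubst_lift_mu_fresh.
    + rewrite app_nil_r, map_map. apply map_ext. intros; apply msubst_lift_mu_fresh.
Qed.

Lemma red_ctx (f : term -> term) :
  (forall t t', step t t' -> step (f t) (f t')) ->
  forall t t', red t t' -> red (f t) (f t').
Proof.
  intros Hf t t' H. induction H.
  - apply rt_step. auto.
  - apply rt_refl.
  - eapply rt_trans; eauto.
Qed.

Lemma step_apply_stack (p : list term) (t t' : term) :
  step t t' -> step (apply_stack t p) (apply_stack t' p).
Proof. revert t t'; induction p; intros; simpl; auto. apply IHp. constructor. auto. Qed.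

Lemma red_apply_stack (p : list term) (t t' : term) :
  red t t' -> red (apply_stack t p) (apply_stack t' p).
Proof. apply red_ctx. apply step_apply_stack. Qed.

Lemma red_apply_stack_mu (p : list term) s z r (l : list term) (t : term) :
  red (apply_stack (Mu (ssubst (fun n => lift_mu 0 (s n)) (up_ren z)
                                (up_stacks l r) t)) p)
      (Mu (ssubst (fun n => lift_mu 0 (s n)) (up_ren z) (up_stacks (l ++ p) r) t)).
Proof.
  revert l; induction p as [|w p IHp]; intros l.
  - rewrite app_nil_r. apply rt_refl.
  - simpl. eapply rt_trans.
    + apply rt_step. apply step_apply_stack. apply step_mu.
    + rewrite msubst0_ssubst_mu.
      replace (l ++ w :: p) with ((l ++ [w]) ++ p) by (rewrite <- app_assoc; reflexivity).
      apply IHp.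
Qed.

(** * Realizability *)

Section Realizability.

Variable x : nat.

Definition reduces_into_M (t : term) : Prop := exists m, M (Var x) m /\ red t m.

Definition realizer (S : list term -> Prop) (t : term) : Prop :=
  forall z p, S p -> reduces_into_M (apply_stack (mren z t) p).

Fixpoint stack_of (A : type) : list term -> Prop :=
  match A with
  | TVar _ => Forall (fun t => exists y, t = Var y)
  | TBot => fun p => p = []
  | TArr A B => fun p => exists u p', p = u :: p' /\
      realizer (stack_of A) u /\ stack_of B p'
  end.

Definition realizes (A : type) : term -> Prop := realizer (stack_of A).

Lemma reduces_into_M_expand (t t' : term) :
  red t t' -> reduces_into_M t' -> reduces_into_M t.
Proof. intros H [m [Hm Hr]]. exists m. split; auto. eapply rt_trans; eauto. Qed.

Lemma reduces_into_M_mu (t : term) : reduces_into_M t -> reduces_into_M (Mu t).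
Proof.
  intros [m [Hm Hr]]. exists (Mu m). split.
  - constructor; auto.
  - apply red_ctx; auto. intros. constructor; auto.
Qed.

Lemma reduces_into_M_mapp (a : nat) (t : term) :
  reduces_into_M t -> reduces_into_M (MApp a t).
Proof.
  intros [m [Hm Hr]]. exists (MApp a m). split.
  - constructor; auto.
  - apply red_ctx; auto. intros. constructor; auto.
Qed.

Lemma stack_of_mren (A : type) (p : list term) (z : nat -> nat) :
  stack_of A p -> stack_of A (map (mren z) p).
Proof.
  revert p; induction A; simpl; intros p H.
  - induction H as [|t p [y ->]]; simpl; constructor; eauto.
  - subst; reflexivity.
  - destruct H as (u & p' & -> & Hu & Hp).
    exists (mren z u), (map (mren z) p'). repeat split; auto.
    intros z0 p0 H0. rewrite mren_mren. auto.
Qed.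

Lemma stack_of_lift_mu (A : type) (p : list term) (c : nat) :
  stack_of A p -> stack_of A (map (lift_mu c) p).
Proof.
  intros H. erewrite map_ext by (intros; apply lift_mu_mren).
  apply stack_of_mren; auto.
Qed.

Lemma realizes_mren (A : type) (t : term) (z : nat -> nat) :
  realizes A t -> realizes A (mren z t).
Proof. intros H z' p Hp. rewrite mren_mren. auto. Qed.

Definition realizing_env G D (s : nat -> term) (r : nat -> list term) : Prop :=
  (forall n B, nth_error G n = Some B -> realizes B (s n)) /\
  (forall a B, nth_error D a = Some B -> stack_of B (r a)).

Lemma realizing_env_mren G D s r (z : nat -> nat) :
  realizing_env G D s r ->
  realizing_env G D (fun n => mren z (s n)) (fun a => map (mren z) (r a)).
Proof.
  intros [Hs Hr]. split; intros.
  - apply realizes_mren; eauto.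
  - apply stack_of_mren; eauto.
Qed.

Lemma realizing_env_scons G D s r (A : type) (u : term) :
  realizes A u -> realizing_env G D s r ->
  realizing_env (A :: G) D (scons u s) r.
Proof.
  intros Hu [Hs Hr]. split; auto.
  intros [|n] B HB; simpl in HB; [injection HB as <-|]; eauto.
Qed.

Lemma realizing_env_up_stacks G D s r (A : type) (p : list term) :
  stack_of A p -> realizing_env G D s r ->
  realizing_env G (A :: D) (fun n => lift_mu 0 (s n)) (up_stacks p r).
Proof.
  intros Hp [Hs Hr]. split.
  - intros n B HB. rewrite lift_mu_mren. apply realizes_mren. eauto.
  - intros [|a] B HB; simpl in HB; [injection HB as <-|]; apply stack_of_lift_mu; eauto.
Qed.

(* The stack-level form of adequacy, without the renaming in [realizer]:
   renamings can be pushed into the environment by [mren_ssubst]. *)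
Definition adequate G D (t : term) (A : type) : Prop :=
  forall s z r p, realizing_env G D s r -> stack_of A p ->
    reduces_into_M (apply_stack (ssubst s z r t) p).

Lemma adequate_realizes G D t A s z r :
  adequate G D t A -> realizing_env G D s r -> realizes A (ssubst s z r t).
Proof.
  intros Ht Hsr z' p Hp. rewrite mren_ssubst.
  apply Ht; auto. apply realizing_env_mren; auto.
Qed.

Lemma adequacy G D (t : term) (A : type) : typing G D t A -> adequate G D t A.
Proof.
  induction 1; intros s z r p Hsr Hp.
  - simpl. rewrite <- (mren_id (s n)). apply (proj1 Hsr n A); auto.
  - destruct Hp as (u & p' & -> & Hu & Hp'). simpl.
    eapply reduces_into_M_expand.
    + apply red_apply_stack, rt_step, step_beta.
    + rewrite subst_ssubst_up. apply IHtyping; auto.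
      apply realizing_env_scons; auto.
  - apply (IHtyping1 s z r (ssubst s z r v :: p)); auto.
    exists (ssubst s z r v), p. repeat split; auto.
    exact (adequate_realizes G D v A s z r IHtyping2 Hsr).
  - simpl. eapply reduces_into_M_expand; [apply red_apply_stack_mu|].
    apply reduces_into_M_mu. apply (IHtyping _ _ _ []); auto; [|reflexivity].
    apply realizing_env_up_stacks; auto.
  - simpl in Hp; subst p. apply reduces_into_M_mapp.
    apply IHtyping; auto. apply (proj2 Hsr a A); auto.
Qed.

End Realizability.

Theorem mainTheorem7 (e : term) (X : nat) :
  typing nil nil e (TArr TBot (TVar X)) ->
  forall (x : nat) (ys : list nat),
    exists t, M (Var x) t /\ red (apps (App e (Var x)) ys) t.
Proof.
  intros He x ys.
  assert (Henv : realizing_env x nil nil Var (fun _ => [])).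
  { split; intros [|n] B HB; discriminate. }
  assert (Hx : realizes x TBot (Var x)).
  { intros z p ->. exists (Var x). split; [constructor | apply rt_refl]. }
  assert (Hys : stack_of x (TVar X) (map Var ys)).
  { apply Forall_forall. intros t Ht. apply in_map_iff in Ht.
    destruct Ht as [y [<- _]]. eauto. }
  destruct (adequacy x _ _ _ _ He Var (fun a => a) (fun _ => [])
              (Var x :: map Var ys) Henv) as [m [Hm Hr]].
  { exists (Var x), (map Var ys). auto. }
  rewrite ssubst_id in Hr. exists m. rewrite apps_apply_stack. auto.
Qed.
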